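(* Let $T\subseteq\{0,1\}^n$ be nonempty, $\delta\in[0,1]$, $\varepsilon\ge0$, and let $f:\{0,1\}^n\to\mathbb{R}$ satisfy $f(x)=0$ for $x\notin T$ and $|f(x)|\le1+\varepsilon$ for $x\in T$. Define $\widetilde f(S):=\widehat f(S)\cdot 2^n/|T|$ for $S\subseteq[n]$. Then $$\sum_{S\subseteq[n]}\delta^{|S|}\,\widetilde f(S)^2\le(1+\varepsilon)^2\left(\frac{2^n}{|T|}\right)^{2\delta}.$$
   Context: Fourier coefficients: $\widehat f(S):=2^{-n}\sum_{x\in\{0,1\}^n}f(x)\chi_S(x)$ with $\chi_S(x)=(-1)^{\sum_{j\in S}x_j}$; the convention $0^0=1$ is used for $\delta=0$. *)

From mathcomp Require Import all_boot all_order all_algebra.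
From mathcomp Require Import all_classical all_reals all_analysis.
Set Implicit Arguments. Unset Strict Implicit. Unset Printing Implicit Defensive.
Import Order.TTheory GRing.Theory Num.Theory.
Local Open Scope ring_scope.

(* Boolean cube {0,1}^n as {ffun 'I_n -> bool}; true encodes 1. *)
Definition cube (n : nat) := {ffun 'I_n -> bool}.

Definition chi {R : realType} {n : nat} (S : {set 'I_n}) (x : cube n) : R :=
  (-1) ^+ (\sum_(j in S) (x j : nat))%N.

Definition fourier {R : realType} {n : nat} (f : cube n -> R) (S : {set 'I_n}) : R :=
  (2 ^+ n)^-1 * \sum_(x : cube n) f x * chi S x.

Definition ftilde {R : realType} {n : nat} (T : {set cube n}) (f : cube n -> R)
  (S : {set 'I_n}) : R :=
  fourier f S * (2 ^+ n / (#|T|)%:R).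

From mathcomp Require Import all_boot all_order all_algebra.
From mathcomp Require Import all_classical all_reals all_analysis.
From mathcomp Require Import ring lra.
Import Order.TTheory GRing.Theory Num.Theory.
Local Open Scope ring_scope.

(* The left-hand side is [(2^n/|T|)^2] times the noise stability
   [Stab_d f = \sum_S d^|S| fhat(S)^2], and Bonami's hypercontractive inequality
   gives [Stab_d f <= ||f||_(1+d)^2] for the uniform probability on the cube.
   It is proved by induction on [n]: writing [f] as [g + h] or [g - h] according
   to its first coordinate, [Stab_d f = Stab_d g + d Stab_d h]; the reverse
   Minkowski inequality for the exponent [(1+d)/2 <= 1] merges the two norms,
   and the two-point inequality
   [(a^2 + d b^2)^((1+d)/2) <= (|a+b|^(1+d) + |a-b|^(1+d))/2], proved by
   calculus, closes the induction.  As [|f| <= 1+eps] on its support [T],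
   [||f||_(1+d)^2 <= (1+eps)^2 (|T|/2^n)^(2/(1+d))], and [2 - 2/(1+d) <= 2d]. *)

Section Hypercontractivity.
Context {R : realType}.
Implicit Types (a c d k l p r s t u : R) (f df : R -> R).

Lemma powR_le_tangent (y : R) r : 0 <= y -> 0 <= r <= 1 -> powR y r <= 1 + r * (y - 1).
Proof.
move=> y0 /andP[r0 r1].
have [->|rn0] := eqVneq r 0; first by rewrite powRr0 mul0r addr0.
have [->|yn0] := eqVneq y 0; first by rewrite powR0 // add0r; lra.
have yp : 0 < y by rewrite lt0r yn0 y0.
have := concave_ln (Itv01 r0 r1) yp ltr01.
rewrite !convRE /= ln1 mulr0 addr0 mulr1 /unstable.onem => conc.
have pos : 0 < r * y + (1 - r).
  have [->|r1'] := eqVneq r 1; first by rewrite mul1r subrr addr0.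
  have : 0 < 1 - r by rewrite subr_gt0 lt_neqAle r1' r1.
  have : 0 <= r * y by rewrite mulr_ge0.
  lra.
rewrite /powR (negbTE yn0); apply: le_trans (_ : expR (ln (r * y + (1 - r))) <= _).
  by rewrite ler_expR.
rewrite lnK ?posrE //; lra.
Qed.

Lemma powR_ge_tangent (y : R) s : 0 < y -> s <= 0 -> 1 + s * (y - 1) <= powR y s.
Proof.
move=> y0 s0; rewrite /powR gt_eqF //; apply: le_trans (expR_ge1Dx _).
rewrite lerD2l ler_wnM2l // -[X in ln X](subrKC 1) le_ln1Dx //; lra.
Qed.

Lemma powR_concave l (x y : R) r : 0 <= l <= 1 -> 0 <= x -> 0 <= y -> 0 <= r <= 1 ->
  l * powR x r + (1 - l) * powR y r <= powR (l * x + (1 - l) * y) r.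
Proof.
move=> /andP[l0 l1] x0 y0 r01; case/andP: (r01) => r0 r1.
have [->|rn0] := eqVneq r 0; first by rewrite !powRr0; lra.
set w := l * x + (1 - l) * y.
have [lx0 ly0] : 0 <= l * x /\ 0 <= (1 - l) * y by rewrite !mulr_ge0 ?subr_ge0.
have [w0|wn0] := eqVneq w 0.
  have vanish (a b : R) : a * b = 0 -> a * powR b r = 0.
    by move/eqP; rewrite mulf_eq0 => /orP[]/eqP ->; rewrite ?mul0r // powR0 ?mulr0.
  by rewrite w0 powR0 // !vanish //; move: w0; rewrite /w; lra.
have wp : 0 < w by rewrite lt0r wn0 addr_ge0.
(* the tangent line of [powR ^~ r] at [w], rescaled from the tangent at [1] *)
have tangent z : 0 <= z -> powR z r <= powR w r * (1 + r * (z / w - 1)).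
  move=> z0; rewrite -{1}(divfK wn0 z) powRM ?divr_ge0 ?(ltW wp) // mulrC.
  by rewrite ler_pM2l ?powR_gt0 // powR_le_tangent ?divr_ge0 ?(ltW wp).
have convex_comb : l * (x / w) + (1 - l) * (y / w) = 1 by rewrite !mulrA -mulrDl divff.
have lm0 : 0 <= 1 - l by rewrite subr_ge0.
have := lerD (ler_wpM2l l0 (tangent x x0)) (ler_wpM2l lm0 (tangent y y0)).
congr (_ <= _).
have e : powR w r = powR w r * (1 + r * (l * (x / w) + (1 - l) * (y / w) - 1)).
  by rewrite convex_comb subrr mulr0 addr0 mulr1.
by rewrite [RHS]e; ring.
Qed.

(** * Power means *)

Section PowerMean.
Context {I : finType}.
Implicit Types (G H : I -> R).

Definition power_mean c r G : R := powR (c * \sum_i powR (G i) r) r^-1.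

Lemma powR_invrK a r : 0 <= a -> r != 0 -> powR (powR a r) r^-1 = a.
Proof. by move=> a0 rn0; rewrite -powRrM mulfV // powRr1. Qed.

Lemma mul_sum_powR_ge0 c r G : 0 <= c -> 0 <= c * \sum_i powR (G i) r.
Proof. by move=> c0; rewrite mulr_ge0 // sumr_ge0 // => i _; exact: powR_ge0. Qed.

Lemma power_mean_ge0 c r G : 0 <= power_mean c r G.
Proof. exact: powR_ge0. Qed.

Lemma powR_power_mean c r G : 0 <= c -> r != 0 ->
  powR (power_mean c r G) r = c * \sum_i powR (G i) r.
Proof.
by move=> c0 rn0; rewrite -powRrM mulVf // powRr1 // mul_sum_powR_ge0.
Qed.

Lemma le_power_mean c r G H : 0 <= c -> 0 < r ->
  (forall i, 0 <= G i <= H i) -> power_mean c r G <= power_mean c r H.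
Proof.
move=> c0 r0 GH; apply: ge0_ler_powR; rewrite ?nnegrE ?invr_ge0 ?(ltW r0) ?mul_sum_powR_ge0 //.
rewrite ler_wpM2l // ler_sum // => i _; have /andP[G0 GHi] := GH i.
by apply: ge0_ler_powR; rewrite ?nnegrE ?(ltW r0) // (le_trans G0).
Qed.

Lemma power_meanZ c r d G : 0 <= c -> 0 < r -> 0 <= d -> (forall i, 0 <= G i) ->
  power_mean c r (fun i => d * G i) = d * power_mean c r G.
Proof.
move=> c0 r0 d0 G0; rewrite /power_mean.
under eq_bigr => i _ do rewrite powRM //.
rewrite -mulr_sumr mulrCA [LHS]powRM ?powR_ge0 ?mul_sum_powR_ge0 //.
by rewrite powR_invrK // gt_eqF.
Qed.

Lemma power_mean_ge1 c r G : 0 < r -> 1 <= c * \sum_i powR (G i) r -> 1 <= power_mean c r G.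
Proof.
move=> r0 ge1; apply: le_trans (_ : powR 1 r^-1 <= _); first by rewrite powR1.
apply: ge0_ler_powR; rewrite ?nnegrE ?invr_ge0 ?(ltW r0) //.
exact: le_trans ge1.
Qed.

(* Reverse Minkowski inequality: normalize both means to 1 and use the
   concavity of [powR ^~ r] pointwise. *)
Lemma power_mean_superadditive c r G H : 0 < c -> 0 < r <= 1 ->
  (forall i, 0 <= G i) -> (forall i, 0 <= H i) ->
  power_mean c r G + power_mean c r H <= power_mean c r (fun i => G i + H i).
Proof.
move=> /ltW c0 /andP[r0 r1] G0 H0.
have GH0 i : 0 <= G i + H i by rewrite addr_ge0.
set A := power_mean c r G; set B := power_mean c r H.
have [->|An0] := eqVneq A 0.
  by rewrite add0r; apply: le_power_mean => // i; rewrite H0 lerDr G0.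
have [->|Bn0] := eqVneq B 0.
  by rewrite addr0; apply: le_power_mean => // i; rewrite G0 lerDl H0.
have Ap : 0 < A by rewrite lt0r An0 power_mean_ge0.
have Bp : 0 < B by rewrite lt0r Bn0 power_mean_ge0.
have normalized F : (forall i, 0 <= F i) -> 0 < power_mean c r F ->
    c * \sum_i powR ((power_mean c r F)^-1 * F i) r = 1.
  move=> F0 Fp; rewrite -powR_power_mean ?gt_eqF //.
  by rewrite power_meanZ ?invr_ge0 ?(ltW Fp) // mulVf ?gt_eqF // powR1.
have nG := normalized G G0 Ap; have nH := normalized H H0 Bp.
rewrite -/A -/B in nG nH; clearbody A B.
have Wp : 0 < A + B by rewrite addr_gt0.
have l01 : 0 <= A / (A + B) <= 1.
  by rewrite divr_ge0 ?(ltW Ap) ?(ltW Wp) // ler_pdivrMr // mul1r lerDl (ltW Bp).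
have split i : (A + B)^-1 * (G i + H i) =
    A / (A + B) * (A^-1 * G i) + (1 - A / (A + B)) * (B^-1 * H i).
  by field; rewrite !gt_eqF.
have : 1 <= power_mean c r (fun i => (A + B)^-1 * (G i + H i)).
  apply: power_mean_ge1 => //.
  set l := A / (A + B) in l01 split *.
  apply: le_trans (_ : l * (c * \sum_i powR (A^-1 * G i) r) +
                      (1 - l) * (c * \sum_i powR (B^-1 * H i) r) <= _).
    by rewrite nG nH; lra.
  rewrite mulrCA [X in _ + X]mulrCA -mulrDr ler_wpM2l // !mulr_sumr -big_split.
  apply: ler_sum => i _; rewrite split; case/andP: l01 => l0 l1.
  by apply: powR_concave; rewrite ?l0 ?l1 ?mulr_ge0 ?invr_ge0 ?(ltW Ap) ?(ltW Bp) ?(ltW r0).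
by rewrite power_meanZ ?invr_ge0 ?(ltW Wp) // ler_pdivlMl // mulr1.
Qed.

Lemma power_mean_le_support (A : {set I}) c r M G : 0 <= c -> 0 < r -> 0 <= M ->
  (forall i, i \notin A -> G i = 0) -> (forall i, i \in A -> 0 <= G i <= M) ->
  power_mean c r G <= powR (c * #|A|%:R) r^-1 * M.
Proof.
move=> c0 r0 M0 Gout Gin.
apply: le_trans (_ : power_mean c r (fun i => M * (i \in A)%:R) <= _).
  apply: le_power_mean => // i; have [iA|iA] := boolP (i \in A).
    by rewrite mulr1 Gin.
  by rewrite Gout // mulr0 lexx.
rewrite power_meanZ //.
rewrite mulrC /power_mean (bigID (mem A)) /= [X in _ + X]big1 => [|i /negbTE ->]; last first.
  by rewrite powR0 // gt_eqF.
by rewrite addr0 (eq_bigr (fun=> 1)) ?sumr_const // => i ->; rewrite powR1.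
Qed.

End PowerMean.

(** * The two-point inequality *)

Lemma is_derive_affine a (b : R) u : is_derive u 1 (fun v : R => a + b * v) b.
Proof.
have -> : (fun v : R => a + b * v) = cst a + b \*: id by apply/funext.
by apply: is_derive_eq; rewrite add0r; exact: mulr1.
Qed.

Lemma is_derive_powR_affine p (b : R) u : 0 < 1 + b * u ->
  is_derive u 1 (fun v => powR (1 + b * v) p) (p * powR (1 + b * u) (p - 1) * b).
Proof.
move=> pos; have -> : (fun v => powR (1 + b * v) p) = (@powR R ^~ p) \o (fun v => 1 + b * v) by [].
by apply: is_derive1_comp; [exact: is_derive1_powR | exact: is_derive_affine].
Qed.

Lemma is_derive_quadratic k u : is_derive u 1 (fun v : R => 0 + k * v ^+ 2) (2 * k * u).
Proof.
have -> : (fun v : R => 0 + k * v ^+ 2) = cst 0 + k \*: ((id : R -> R) * id) by apply/funext.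
apply: is_derive_eq; transitivity (0 + k * (u * 1 + u * 1)); first by [].
ring.
Qed.

Lemma ge0_derive_le f df a (b : R) : a <= b ->
  (forall x, a <= x <= b -> is_derive x 1 f (df x)) ->
  (forall x, a < x < b -> 0 <= df x) -> f a <= f b.
Proof.
move=> ab der dfge0.
have der_open x : x \in `]a, b[ -> is_derive x 1 f (df x).
  by rewrite in_itv => /andP[ax xb]; apply: der; rewrite !ltW.
apply: (@ger0_derive1_ndecr _ f a b) => //.
- by move=> x /der_open [].
- move=> x xab; rewrite derive1E; have [_ ->] := der_open x xab.
  by apply: dfge0; rewrite in_itv in xab.
apply: derivable_within_continuous => x; rewrite in_itv /= => xab.
by have [] := der x xab.
Qed.

(* The affine arguments are spelled [1 + 1 * v], [1 + (-1) * v] and [0 + _]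
   below so that the derivative lemmas above apply verbatim. *)
Lemma powR_odd_part_ge s t : 0 <= s <= 1 -> 0 <= t < 1 ->
  2 * s * t <= powR (1 + t) s - powR (1 - t) s.
Proof.
move=> /andP[s0 s1] /andP[t0 t1].
pose f := (fun v => powR (1 + 1 * v) s) - (fun v => powR (1 + (-1) * v) s)
          - (fun v : R => 0 + 2 * s * v).
pose df x := s * powR (1 + 1 * x) (s - 1) * 1
             - s * powR (1 + (-1) * x) (s - 1) * (-1) - 2 * s.
have : f 0 <= f t.
  apply: (@ge0_derive_le f df) => // [x /andP[x0 xt]|x /andP[x0 xt]].
    apply: is_deriveB; last exact: is_derive_affine.
    by apply: is_deriveB; apply: is_derive_powR_affine; lra.
  (* each power lies above its tangent line at [1], and the slopes cancel *)
  have := @powR_ge_tangent (1 + 1 * x) (s - 1); have := @powR_ge_tangent (1 + (-1) * x) (s - 1).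
  rewrite /df; nra.
have Ef v : f v = powR (1 + 1 * v) s - powR (1 + (-1) * v) s - (0 + 2 * s * v) by [].
rewrite !Ef !mulr0 !addr0 powR1 !mul1r mulN1r; lra.
Qed.

Lemma powR_even_part_ge_lt1 s t : 0 <= s <= 1 -> 0 <= t < 1 ->
  2 + (1 + s) * s * t ^+ 2 <= powR (1 + t) (1 + s) + powR (1 - t) (1 + s).
Proof.
move=> s01 /andP[t0 t1]; case/andP: (s01) => s0 s1.
pose f := (fun v => powR (1 + 1 * v) (1 + s)) + (fun v => powR (1 + (-1) * v) (1 + s))
          - (fun v : R => 0 + (1 + s) * s * v ^+ 2).
pose df x := (1 + s) * powR (1 + 1 * x) (1 + s - 1) * 1
             + (1 + s) * powR (1 + (-1) * x) (1 + s - 1) * (-1) - 2 * ((1 + s) * s) * x.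
have : f 0 <= f t.
  apply: (@ge0_derive_le f df) => // [x /andP[x0 xt]|x /andP[x0 xt]].
    apply: is_deriveB; last exact: is_derive_quadratic.
    by apply: is_deriveD; apply: is_derive_powR_affine; lra.
  have -> : df x = (1 + s) * (powR (1 + x) s - powR (1 - x) s - 2 * s * x).
    by rewrite /df !mul1r !mulN1r (addrC 1 s) addrK; ring.
  rewrite mulr_ge0 ?subr_ge0 ?powR_odd_part_ge //; first lra.
  by rewrite (ltW x0) (lt_trans xt t1).
have Ef v : f v = powR (1 + 1 * v) (1 + s) + powR (1 + (-1) * v) (1 + s)
                  - (0 + (1 + s) * s * v ^+ 2) by [].
rewrite !Ef expr0n /= !mulr0 !addr0 powR1 !mul1r mulN1r; lra.
Qed.

Lemma powR_even_part_ge s t : 0 <= s <= 1 -> 0 <= t <= 1 ->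
  2 + (1 + s) * s * t ^+ 2 <= powR (1 + t) (1 + s) + powR (1 - t) (1 + s).
Proof.
move=> s01 /andP[t0]; rewrite le_eqVlt => /predU1P[->|t1]; last first.
  by apply: powR_even_part_ge_lt1; rewrite ?t0.
case/andP: (s01) => s0 s1; set k := (1 + s) * s.
have [k0 k2] : 0 <= k /\ k <= 2 by rewrite /k; split; nra.
rewrite subrr powR0 ?expr1n ?mulr1 ?addr0; last by rewrite gt_eqF //; lra.
(* the endpoint [t = 1] is the limit of the case [t = 1 - u], [u > 0], which
   misses it by at most [5 u] *)
apply/ler_addgt0Pr => e e0; set u := e / (e + 5).
have [u0 u1] : 0 < u /\ u < 1 by rewrite /u ltr_pdivrMr ?divr_gt0; lra.
have := @powR_even_part_ge_lt1 s (1 - u) s01 (ltac:(apply/andP; split; lra)).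
have -> : 1 - (1 - u) = u by ring.
have top : powR (1 + (1 - u)) (1 + s) <= powR (1 + 1) (1 + s).
  by apply: ge0_ler_powR; rewrite ?nnegrE; lra.
have small : powR u (1 + s) <= u by apply: ge1r_powR; rewrite ?u0 ?(ltW u1) //; lra.
have u5 : 5 * u <= e by rewrite /u mulrA ler_pdivrMr ?addr_gt0 //; nra.
rewrite -/k; nra.
Qed.

Lemma powR_sqr_half (x : R) p : powR (x ^+ 2) (p / 2) = powR `|x| p.
Proof.
by rewrite -(real_normK (num_real x)) -powR_mulrn // -powRrM mulrC -mulrA mulVf ?mulr1.
Qed.

Lemma two_point_unit d t : 0 <= d <= 1 -> 0 <= t <= 1 ->
  powR (1 + d * t ^+ 2) ((1 + d) / 2) <= (powR (1 + t) (1 + d) + powR (1 - t) (1 + d)) / 2.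
Proof.
move=> d01 t01; case/andP: (d01) => d0 d1.
have y0 : 0 <= 1 + d * t ^+ 2 by apply: addr_ge0; [exact: ler01 | exact: mulr_ge0 d0 (sqr_ge0 t)].
have r01 : 0 <= (1 + d) / 2 <= 1 by apply/andP; split; lra.
have := @powR_le_tangent (1 + d * t ^+ 2) ((1 + d) / 2) y0 r01.
have := @powR_even_part_ge d t d01 t01; nra.
Qed.

(* Bonami's two-point inequality: [|| a + sqrt d b x ||_2 <= || a + b x ||_(1+d)]
   for a uniform random sign [x]. *)
Lemma two_point_ineq d a (b : R) : 0 <= d <= 1 ->
  powR (a ^+ 2 + d * b ^+ 2) ((1 + d) / 2)
    <= (powR `|a + b| (1 + d) + powR `|a - b| (1 + d)) / 2.
Proof.
move=> d01; case/andP: (d01) => d0 d1.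
wlog b0 : b / 0 <= b.
  move=> gen; have [|bn] := leP 0 b; first exact: gen.
  by have := gen (- b) (ltac:(lra)); rewrite sqrrN opprK [X in _ <= X / 2]addrC.
wlog a0 : a / 0 <= a.
  move=> gen; have [|an] := leP 0 a; first exact: gen.
  have := gen (- a) (ltac:(lra)); rewrite sqrrN -normrN opprD opprK.
  by rewrite -[`|- a - b|]normrN opprD !opprK [X in _ <= X / 2]addrC.
wlog ba : a b a0 b0 / b <= a.
  move=> gen; have [|ab] := leP b a; first exact: gen.
  rewrite (addrC a b) (distrC a b); apply: le_trans (gen b a b0 a0 (ltW ab)).
  have gap : 0 <= (1 - d) * ((b - a) * (b + a)) by rewrite !mulr_ge0 //; lra.
  apply: ge0_ler_powR; rewrite ?nnegrE; try lra; nra.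
have [a_eq0|an0] := eqVneq a 0.
  have -> : b = 0 by lra.
  rewrite a_eq0 expr0n mulr0 addr0 powR0; last by rewrite mulf_neq0 ?invr_eq0 ?pnatr_eq0 //; lra.
  by rewrite divr_ge0 ?addr_ge0 ?powR_ge0.
have ap : 0 < a by rewrite lt0r an0.
have [t /andP[t0 t1] ->] : exists2 t, 0 <= t <= 1 & b = a * t.
  by exists (b / a); rewrite ?divr_ge0 ?ler_pdivrMr ?mul1r // mulrC divfK.
have y0 : 0 <= 1 + d * t ^+ 2 by apply: addr_ge0; [exact: ler01 | exact: mulr_ge0 d0 (sqr_ge0 t)].
have e1 : a ^+ 2 + d * (a * t) ^+ 2 = a ^+ 2 * (1 + d * t ^+ 2) by ring.
have e2 : `|a + a * t| = a * (1 + t) by rewrite ger0_norm; [ring | nra].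
have e3 : `|a - a * t| = a * (1 - t) by rewrite ger0_norm; [ring | nra].
have [tp tm] : 0 <= 1 + t /\ 0 <= 1 - t by split; lra.
rewrite e1 e2 e3 powRM ?sqr_ge0 // powR_sqr_half (ger0_norm a0) !powRM //.
rewrite -mulrDr -mulrA ler_wpM2l ?powR_ge0 //.
by apply: two_point_unit; rewrite ?t0.
Qed.

(** * Noise stability on the Boolean cube *)

Definition cube_cons {n} (b : bool) (x : cube n) : cube n.+1 :=
  [ffun i => if unlift ord0 i is Some j then x j else b].

Lemma cube_cons0 n b (x : cube n) : cube_cons b x ord0 = b.
Proof. by rewrite ffunE unlift_none. Qed.

Lemma cube_cons_lift n b (x : cube n) j : cube_cons b x (lift ord0 j) = x j.
Proof. by rewrite ffunE liftK. Qed.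

Lemma sum_cube0 (F : cube 0 -> R) : \sum_(x : cube 0) F x = F [ffun i => false].
Proof. by rewrite (big_pred1 [ffun i => false]) // => x; apply/esym/eqP/ffunP => -[]. Qed.

Lemma sum_cubeS n (F : cube n.+1 -> R) :
  \sum_(y : cube n.+1) F y = \sum_(b : bool) \sum_(x : cube n) F (cube_cons b x).
Proof.
rewrite pair_big (reindex (fun p : bool * cube n => cube_cons p.1 p.2)) //.
exists (fun y : cube n.+1 => (y ord0, [ffun j => y (lift ord0 j)])).
  move=> [b x] _; rewrite cube_cons0; congr (_, _).
  by apply/ffunP => j; rewrite ffunE cube_cons_lift.
move=> y _; apply/ffunP => i; rewrite ffunE /=.
by case: unliftP => [j ->|->] //; rewrite ffunE.
Qed.

Definition sign (b : bool) : R := (-1) ^+ b.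

Lemma chiE n S (x : cube n) : chi S x = \prod_(i in S) sign (x i) :> R.
Proof. by rewrite /chi /sign prodrXr. Qed.

Definition noise_kernel (d : R) {n} (x y : cube n) : R :=
  \prod_i (1 + d * (sign (x i) * sign (y i))).

Lemma sum_chi_noise_kernel d n (x y : cube n) :
  \sum_(S : {set 'I_n}) d ^+ #|S| * (chi S x * chi S y) = noise_kernel d x y.
Proof.
rewrite /noise_kernel (eq_bigr (fun i => d * (sign (x i) * sign (y i)) + 1)); last first.
  by move=> i _; rewrite addrC.
rewrite bigA_distr; apply: eq_bigr => S _.
by rewrite -big_mkcond big_split prodr_const big_split -!chiE.
Qed.

Lemma noise_kernel_cons d n (b c : bool) (x y : cube n) :
  noise_kernel d (cube_cons b x) (cube_cons c y) =
  (1 + d * (sign b * sign c)) * noise_kernel d x y.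
Proof.
rewrite /noise_kernel big_ord_recl !cube_cons0; congr (_ * _).
by apply: eq_bigr => j _; rewrite !cube_cons_lift.
Qed.

Definition noise_form (d : R) {n} (f : cube n -> R) : R :=
  \sum_x \sum_y f x * f y * noise_kernel d x y.

Definition noise_stab (d : R) {n} (f : cube n -> R) : R :=
  \sum_(S : {set 'I_n}) d ^+ #|S| * fourier f S ^+ 2.

Lemma noise_stab_kernel d n (f : cube n -> R) :
  noise_stab d f = (2 ^+ n)^-1 ^+ 2 * noise_form d f.
Proof.
have sqr_sum (a : cube n -> R) : (\sum_x a x) ^+ 2 = \sum_x \sum_y a x * a y.
  by rewrite expr2 big_distrlr.
rewrite /noise_stab /noise_form /fourier.
under eq_bigr => S _ do rewrite exprMn sqr_sum.
transitivity ((2 ^+ n)^-1 ^+ 2 * \sum_(S : {set 'I_n}) \sum_x \sum_y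
                d ^+ #|S| * (f x * chi S x * (f y * chi S y))).
  rewrite mulr_sumr; apply: eq_bigr => S _; rewrite mulrCA; congr (_ * _).
  by rewrite mulr_sumr; apply: eq_bigr => x _; rewrite mulr_sumr.
congr (_ * _); rewrite exchange_big; apply: eq_bigr => x _.
rewrite exchange_big; apply: eq_bigr => y _.
rewrite -sum_chi_noise_kernel mulr_sumr; apply: eq_bigr => S _; ring.
Qed.

Definition half_sum {n} (f : cube n.+1 -> R) (x : cube n) : R :=
  (f (cube_cons false x) + f (cube_cons true x)) / 2.
Definition half_diff {n} (f : cube n.+1 -> R) (x : cube n) : R :=
  (f (cube_cons false x) - f (cube_cons true x)) / 2.

Lemma noise_form_cons d n (f : cube n.+1 -> R) :
  noise_form d f = 4 * (noise_form d (half_sum f) + d * noise_form d (half_diff f)).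
Proof.
rewrite /noise_form sum_cubeS.
under eq_bigr => b _ do under eq_bigr => x _ do rewrite sum_cubeS.
rewrite exchange_big /=.
transitivity (\sum_x \sum_y 4 * (half_sum f x * half_sum f y
                 + d * (half_diff f x * half_diff f y)) * noise_kernel d x y).
  apply: eq_bigr => x _.
  under eq_bigr => b _ do rewrite exchange_big /=.
  rewrite exchange_big /=; apply: eq_bigr => y _.
  rewrite !big_bool /= !noise_kernel_cons /sign /half_sum /half_diff /=.
  by rewrite !expr0 !expr1; field.
symmetry; rewrite mulrDr mulrA !mulr_sumr -big_split /=; apply: eq_bigr => x _.
by rewrite !mulr_sumr -big_split /=; apply: eq_bigr => y _; ring.
Qed.

Lemma noise_stab_cons d n (f : cube n.+1 -> R) :
  noise_stab d f = noise_stab d (half_sum f) + d * noise_stab d (half_diff f).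
Proof.
rewrite !noise_stab_kernel noise_form_cons [(2 : R) ^+ n.+1]exprS.
by field; rewrite expf_neq0 // pnatr_eq0.
Qed.

Theorem noise_stab_le_power_mean d n (f : cube n -> R) : 0 <= d <= 1 ->
  noise_stab d f <= power_mean (2 ^+ n)^-1 ((1 + d) / 2) (fun x => f x ^+ 2).
Proof.
move=> d01; case/andP: (d01) => d0 d1.
have r0 : 0 < (1 + d) / 2 by lra.
have r1 : (1 + d) / 2 <= 1 by lra.
elim: n f => [|n IH] f.
  rewrite noise_stab_kernel /noise_form /power_mean !sum_cube0 /noise_kernel.
  rewrite big_ord0 expr0 invr1 expr1n !mul1r mulr1 -expr2.
  by rewrite powR_invrK ?sqr_ge0 ?gt_eqF.
have c0 : 0 < (2 ^+ n : R)^-1 by rewrite invr_gt0 exprn_gt0.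
rewrite noise_stab_cons.
apply: le_trans (lerD (IH (half_sum f)) (ler_wpM2l d0 (IH (half_diff f)))) _.
rewrite -power_meanZ ?(ltW c0) //; last by move=> x; exact: sqr_ge0.
apply: le_trans (power_mean_superadditive _ _ _ _ c0 _ _ _) _.
- by rewrite r0 r1.
- by move=> x; exact: sqr_ge0.
- by move=> x; rewrite mulr_ge0 ?sqr_ge0.
rewrite /power_mean; apply: ge0_ler_powR; rewrite ?nnegrE ?invr_ge0 ?(ltW r0) ?mul_sum_powR_ge0 ?(ltW c0) //.
rewrite sum_cubeS big_bool -big_split /= [(2 : R) ^+ n.+1]exprS invfM [_^-1 * _^-1]mulrC -mulrA.
rewrite ler_wpM2l ?(ltW c0) // mulr_sumr ler_sum // => x _.
have := two_point_ineq d (half_sum f x) (half_diff f x) d01.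
have -> : half_sum f x + half_diff f x = f (cube_cons false x).
  by rewrite /half_sum /half_diff; field.
have -> : half_sum f x - half_diff f x = f (cube_cons true x).
  by rewrite /half_sum /half_diff; field.
by rewrite !powR_sqr_half => h; apply: le_trans h _; rewrite mulrC addrC.
Qed.

Corollary noise_stab_le_support d M n (T : {set cube n}) (f : cube n -> R) :
  0 <= d <= 1 -> 0 <= M ->
  (forall x, x \notin T -> f x = 0) -> (forall x, x \in T -> `|f x| <= M) ->
  noise_stab d f <= M ^+ 2 * powR ((2 ^+ n)^-1 * #|T|%:R) (2 / (1 + d)).
Proof.
move=> d01 M0 fout fin; case/andP: (d01) => d0 d1.
apply: le_trans (@noise_stab_le_power_mean d n f d01) _.
rewrite [leRHS]mulrC -[2 / (1 + d)]invf_div; apply: power_mean_le_support => //.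
- lra.
- exact: sqr_ge0.
- by move=> x /fout ->; rewrite expr0n.
by move=> x /fin fxM; rewrite sqr_ge0 /= -real_normK ?num_real // lerXn2r ?nnegrE.
Qed.

End Hypercontractivity.

Theorem mainTheorem5 (R : realType) (n : nat) (T : {set cube n})
  (delta eps : R) (f : cube n -> R) :
  T != finset.set0 ->
  0 <= delta <= 1 ->
  0 <= eps ->
  (forall x, x \notin T -> f x = 0) ->
  (forall x, x \in T -> `|f x| <= 1 + eps) ->
  \sum_(S : {set 'I_n}) delta ^+ #|S| * (ftilde T f S) ^+ 2
    <= (1 + eps) ^+ 2 * powR (2 ^+ n / (#|T|)%:R) (2 * delta).
Proof.
move=> Tn0 d01 eps0 fout fin; case/andP: (d01) => d0 d1.
set K := 2 ^+ n / #|T|%:R.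
have K1 : 1 <= K.
  have T0 : 0 < #|T|%:R :> R by rewrite ltr0n card_gt0.
  rewrite ler_pdivlMr // mul1r -natrX ler_nat.
  by have := max_card T; rewrite card_ffun card_bool card_ord.
have -> : \sum_(S : {set 'I_n}) delta ^+ #|S| * ftilde T f S ^+ 2 = K ^+ 2 * noise_stab delta f.
  by rewrite /noise_stab mulr_sumr; apply: eq_bigr => S _; rewrite /ftilde -/K exprMn; ring.
have := @noise_stab_le_support _ delta (1 + eps) n T f d01 (ltac:(lra)) fout fin.
have -> : (2 ^+ n)^-1 * #|T|%:R = K^-1 by rewrite /K invf_div mulrC.
move=> /(ler_wpM2l (sqr_ge0 K)) /le_trans; apply.
rewrite mulrCA ler_wpM2l ?sqr_ge0 //.
have Kp : 0 < K by lra.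
rewrite -powR_inv1 ?(ltW Kp) // -powRrM -powR_mulrn ?(ltW Kp) // -powRD ?(gt_eqF Kp) ?implybT //.
apply: ler_powR => //.
have : 2 - 2 * delta <= 2 / (1 + delta) by rewrite ler_pdivlMr; nra.
lra.
Qed.
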